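(* Let $\beta_1<\beta_2<\alpha_1<\alpha_2$ be reals and $C_{\alpha_1},C_{\alpha_2},C_{\beta_1},C_{\beta_2}$ nonzero reals. There exist polynomials $A(x)=\sum_{k=0}^4A_kx^{4-k}$ and $B(y)=\sum_{k=0}^4B_ky^{4-k}$ of degree at most $4$ such that $A(\alpha_i)=0$, $B(\beta_i)=0$, $A'(\alpha_i)=2/C_{\alpha_i}$, $B'(\beta_i)=-2/C_{\beta_i}$ ($i=1,2$) and $A_0=-B_0$, $A_1=-B_1$, $A_2=-B_2$, if and only if $$\frac{(\alpha_1+\alpha_2)^2+2\alpha_2^2+(\beta_1+\beta_2)^2+2\beta_1\beta_2-2(2\alpha_2+\alpha_1)(\beta_1+\beta_2)}{(\alpha_2-\alpha_1)^2C_{\alpha_1}}+\frac{(\alpha_1+\alpha_2)^2+2\alpha_1^2+(\beta_1+\beta_2)^2+2\beta_1\beta_2-2(2\alpha_1+\alpha_2)(\beta_1+\beta_2)}{(\alpha_2-\alpha_1)^2C_{\alpha_2}}$$ $$+\frac{(\beta_1+\beta_2)^2+2\beta_2^2+(\alpha_1+\alpha_2)^2+2\alpha_1\alpha_2-2(2\beta_2+\beta_1)(\alpha_1+\alpha_2)}{(\beta_2-\beta_1)^2C_{\beta_1}}+\frac{(\beta_1+\beta_2)^2+2\beta_1^2+(\alpha_1+\alpha_2)^2+2\alpha_1\alpha_2-2(2\beta_1+\beta_2)(\alpha_1+\alpha_2)}{(\beta_2-\beta_1)^2C_{\beta_2}}=0.$$ In this case $A$ and $B$ are uniquely determined. They have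 $A_0=0$ if and only if $$\frac1{(\alpha_2-\alpha_1)^2}\Big(\frac1{C_{\alpha_1}}+\frac1{C_{\alpha_2}}\Big)=\frac1{(\beta_2-\beta_1)^2}\Big(\frac1{C_{\beta_1}}+\frac1{C_{\beta_2}}\Big),$$ and, when both previous equations hold, they satisfy $A_0=0$ and $A_3=-B_3$ if additionally $$\frac1{(\alpha_2-\alpha_1)^2}\Big(\frac{\alpha_2(2\alpha_1+\alpha_2)}{C_{\alpha_1}}+\frac{\alpha_1(2\alpha_2+\alpha_1)}{C_{\alpha_2}}\Big)=\frac1{(\beta_2-\beta_1)^2}\Big(\frac{\beta_2(2\beta_1+\beta_2)}{C_{\beta_1}}+\frac{\beta_1(2\beta_2+\beta_1)}{C_{\beta_2}}\Big).$$ *)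

From Stdlib Require Import Reals Lra.
Open Scope R_scope.

(* A real polynomial of degree at most 4, written as in the paper:
   P(x) = c0 x^4 + c1 x^3 + c2 x^2 + c3 x + c4  (c_k is the coefficient of x^(4-k)). *)
Record quartic := mkQuartic { qc0 : R; qc1 : R; qc2 : R; qc3 : R; qc4 : R }.

Definition qeval (p : quartic) (x : R) : R :=
  qc0 p * x ^ 4 + qc1 p * x ^ 3 + qc2 p * x ^ 2 + qc3 p * x + qc4 p.

Definition qderiv (p : quartic) (x : R) : R :=
  4 * qc0 p * x ^ 3 + 3 * qc1 p * x ^ 2 + 2 * qc2 p * x + qc3 p.

Lemma qderiv_correct (p : quartic) (x : R) :
  derivable_pt_lim (qeval p) x (qderiv p x).
Proof.
  unfold qeval, qderiv.
  set (f := fun y => qc0 p * y ^ 4 + qc1 p * y ^ 3 + qc2 p * y ^ 2 + qc3 p * y + qc4 p).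
  assert (H : derivable_pt_lim
     (fun y => qc0 p * y ^ 4 + qc1 p * y ^ 3 + qc2 p * y ^ 2 + qc3 p * y + qc4 p) x
     (qc0 p * (INR 4 * x ^ 3) + qc1 p * (INR 3 * x ^ 2) + qc2 p * (INR 2 * x ^ 1)
      + (qc3 p * 1) + 0)).
  { repeat apply derivable_pt_lim_plus.
    - apply derivable_pt_lim_scal. apply derivable_pt_lim_pow.
    - apply derivable_pt_lim_scal. apply derivable_pt_lim_pow.
    - apply derivable_pt_lim_scal. apply derivable_pt_lim_pow.
    - apply derivable_pt_lim_scal. apply derivable_pt_lim_id.
    - apply derivable_pt_lim_const. }
  replace (4 * qc0 p * x ^ 3 + 3 * qc1 p * x ^ 2 + 2 * qc2 p * x + qc3 p)
    with (qc0 p * (INR 4 * x ^ 3) + qc1 p * (INR 3 * x ^ 2) + qc2 p * (INR 2 * x ^ 1)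
      + (qc3 p * 1) + 0) by (simpl; ring).
  exact H.
Qed.

Definition admissible (a1 a2 b1 b2 Ca1 Ca2 Cb1 Cb2 : R) (A B : quartic) : Prop :=
  qeval A a1 = 0 /\ qeval A a2 = 0 /\ qeval B b1 = 0 /\ qeval B b2 = 0 /\
  qderiv A a1 = 2 / Ca1 /\ qderiv A a2 = 2 / Ca2 /\
  qderiv B b1 = - (2 / Cb1) /\ qderiv B b2 = - (2 / Cb2) /\
  qc0 A = - qc0 B /\ qc1 A = - qc1 B /\ qc2 A = - qc2 B.

Definition cond_exist (a1 a2 b1 b2 Ca1 Ca2 Cb1 Cb2 : R) : Prop :=
  ((a1 + a2) ^ 2 + 2 * a2 ^ 2 + (b1 + b2) ^ 2 + 2 * b1 * b2
     - 2 * (2 * a2 + a1) * (b1 + b2)) / ((a2 - a1) ^ 2 * Ca1)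
  + ((a1 + a2) ^ 2 + 2 * a1 ^ 2 + (b1 + b2) ^ 2 + 2 * b1 * b2
     - 2 * (2 * a1 + a2) * (b1 + b2)) / ((a2 - a1) ^ 2 * Ca2)
  + ((b1 + b2) ^ 2 + 2 * b2 ^ 2 + (a1 + a2) ^ 2 + 2 * a1 * a2
     - 2 * (2 * b2 + b1) * (a1 + a2)) / ((b2 - b1) ^ 2 * Cb1)
  + ((b1 + b2) ^ 2 + 2 * b1 ^ 2 + (a1 + a2) ^ 2 + 2 * a1 * a2
     - 2 * (2 * b1 + b2) * (a1 + a2)) / ((b2 - b1) ^ 2 * Cb2)
  = 0.

Definition cond_A0 (a1 a2 b1 b2 Ca1 Ca2 Cb1 Cb2 : R) : Prop :=
  1 / (a2 - a1) ^ 2 * (1 / Ca1 + 1 / Ca2)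
  = 1 / (b2 - b1) ^ 2 * (1 / Cb1 + 1 / Cb2).

Definition cond_A3 (a1 a2 b1 b2 Ca1 Ca2 Cb1 Cb2 : R) : Prop :=
  1 / (a2 - a1) ^ 2 * (a2 * (2 * a1 + a2) / Ca1 + a1 * (2 * a2 + a1) / Ca2)
  = 1 / (b2 - b1) ^ 2 * (b2 * (2 * b1 + b2) / Cb1 + b1 * (2 * b2 + b1) / Cb2).

From Stdlib Require Import Reals Lra.
Open Scope R_scope.

(* A quartic P with P(a) = P(b) = 0, P'(a) = u, P'(b) = v (a <> b) is determined by
   its leading coefficient c: it is c (x-a)^2 (x-b)^2 plus the unique cubic with these
   Hermite data.  We write this family explicitly ([hermite_quartic]) and prove that it
   exhausts all solutions, because a cubic with double zeros at two distinct points
   vanishes.  Hence an admissible pair is A = H(c, a1, a2), B = H(-c, b1, b2), and the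
   constraint A_1 = -B_1 becomes an affine equation in c whose slope is proportional
   to (a1 + a2) - (b1 + b2) <> 0: it fixes c to a value [lead_coef].  The remaining
   constraint A_2 = -B_2, evaluated at this c, is a nonzero multiple of the first
   displayed equation. *)

Lemma scaled_eq_iff (x y z w k : R) :
  k <> 0 -> x - y = k * (z - w) -> (x = y <-> z = w).
Proof.
  intros Hk Hxy; split; intros E.
  - assert (Hzw : k * (z - w) = 0) by lra.
    apply Rmult_integral in Hzw as [Hk0 | Hzw]; [contradiction | lra].
  - rewrite E in Hxy; lra.
Qed.

Lemma cubic_double_zeros (a b d1 d2 d3 d4 : R) : a <> b ->
  d1 * a ^ 3 + d2 * a ^ 2 + d3 * a + d4 = 0 ->
  d1 * b ^ 3 + d2 * b ^ 2 + d3 * b + d4 = 0 ->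
  3 * d1 * a ^ 2 + 2 * d2 * a + d3 = 0 ->
  3 * d1 * b ^ 2 + 2 * d2 * b + d3 = 0 ->
  d1 = 0 /\ d2 = 0 /\ d3 = 0 /\ d4 = 0.
Proof.
  intros Hab Ea Eb Da Db.
  assert (Hd : a - b <> 0) by (intro; apply Hab; lra).
  (* The combination 2(p(a) - p(b)) - (a - b)(p'(a) + p'(b)) equals -d1 (a - b)^3. *)
  assert (H1 : d1 = 0).
  { assert (E : d1 * (a - b) ^ 3 = 0).
    { transitivity ((a - b) * ((3 * d1 * a ^ 2 + 2 * d2 * a + d3)
                               + (3 * d1 * b ^ 2 + 2 * d2 * b + d3))
                    - 2 * ((d1 * a ^ 3 + d2 * a ^ 2 + d3 * a + d4)
                           - (d1 * b ^ 3 + d2 * b ^ 2 + d3 * b + d4))); [ring|].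
      rewrite Ea, Eb, Da, Db; ring. }
    apply Rmult_integral in E as [E | E]; [exact E|].
    exfalso; exact (pow_nonzero _ 3 Hd E). }
  subst d1.
  (* Now p' is affine with two distinct zeros, so its slope 2 d2 vanishes. *)
  assert (H2 : d2 = 0).
  { assert (E : d2 * (a - b) = 0).
    { transitivity (((3 * 0 * a ^ 2 + 2 * d2 * a + d3)
                     - (3 * 0 * b ^ 2 + 2 * d2 * b + d3)) / 2); [field|].
      rewrite Da, Db; field. }
    apply Rmult_integral in E as [E | E]; [exact E | contradiction]. }
  subst d2.
  assert (H3 : d3 = 0) by lra.
  subst d3; repeat split; lra.
Qed.

(* The quartic c (x-a)^2 (x-b)^2 + K(x), where K is the cubic with K(a) = K(b) = 0,
   K'(a) = u, K'(b) = v. *)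
Definition hermite_quartic (c a b u v : R) : quartic :=
  mkQuartic c
    (-2 * (a + b) * c + (u + v) / (a - b) ^ 2)
    (((a + b) ^ 2 + 2 * a * b) * c - (u * (a + 2 * b) + v * (2 * a + b)) / (a - b) ^ 2)
    (-2 * (a + b) * (a * b) * c + (u * b * (2 * a + b) + v * a * (2 * b + a)) / (a - b) ^ 2)
    ((a * b) ^ 2 * c - a * b * (u * b + v * a) / (a - b) ^ 2).

Lemma hermite_quartic_interpolates (c a b u v : R) : a <> b ->
  qeval (hermite_quartic c a b u v) a = 0 /\ qeval (hermite_quartic c a b u v) b = 0 /\
  qderiv (hermite_quartic c a b u v) a = u /\ qderiv (hermite_quartic c a b u v) b = v.
Proof.
  intros Hab; assert (Hd : a - b <> 0) by (intro; apply Hab; lra).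
  unfold hermite_quartic, qeval, qderiv; simpl; repeat split; field; exact Hd.
Qed.

(* Conversely every quartic with these Hermite data is in the family, with c its
   leading coefficient: the difference of the two is a cubic with double zeros. *)
Lemma hermite_quartic_unique (p : quartic) (a b u v : R) : a <> b ->
  qeval p a = 0 -> qeval p b = 0 -> qderiv p a = u -> qderiv p b = v ->
  p = hermite_quartic (qc0 p) a b u v.
Proof.
  intros Hab Ea Eb Da Db.
  set (h := hermite_quartic (qc0 p) a b u v).
  destruct (hermite_quartic_interpolates (qc0 p) a b u v Hab) as (Fa & Fb & Ga & Gb).
  fold h in Fa, Fb, Ga, Gb.
  assert (Hc0 : qc0 h = qc0 p) by reflexivity.
  unfold qeval, qderiv in *; rewrite Hc0 in Fa, Fb, Ga, Gb.
  destruct (cubic_double_zeros a b (qc1 p - qc1 h) (qc2 p - qc2 h)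
              (qc3 p - qc3 h) (qc4 p - qc4 h) Hab) as (G1 & G2 & G3 & G4); try lra.
  destruct p as [c0 c1 c2 c3 c4]; unfold h, hermite_quartic in *; simpl in *.
  f_equal; lra.
Qed.

Section Admissible.

Variables (a1 a2 b1 b2 Ca1 Ca2 Cb1 Cb2 : R).
Hypotheses (Ha12 : a1 <> a2) (Hb12 : b1 <> b2) (Hsum : a1 + a2 <> b1 + b2)
  (HCa1 : Ca1 <> 0) (HCa2 : Ca2 <> 0) (HCb1 : Cb1 <> 0) (HCb2 : Cb2 <> 0).

Let Hda : a1 - a2 <> 0. Proof. intro; apply Ha12; lra. Qed.
Let Hdb : b1 - b2 <> 0. Proof. intro; apply Hb12; lra. Qed.
Let Hda' : a2 - a1 <> 0. Proof. intro; apply Ha12; lra. Qed.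
Let Hdb' : b2 - b1 <> 0. Proof. intro; apply Hb12; lra. Qed.
Let Hds : (a1 + a2) - (b1 + b2) <> 0. Proof. intro; apply Hsum; lra. Qed.

Definition A_of (c : R) : quartic := hermite_quartic c a1 a2 (2 / Ca1) (2 / Ca2).
Definition B_of (c : R) : quartic := hermite_quartic (- c) b1 b2 (- (2 / Cb1)) (- (2 / Cb2)).

(* The unique root of the affine map c |-> A_1 + B_1. *)
Definition lead_coef : R :=
  ((2 / Ca1 + 2 / Ca2) / (a1 - a2) ^ 2 + (- (2 / Cb1) + - (2 / Cb2)) / (b1 - b2) ^ 2)
  / (2 * ((a1 + a2) - (b1 + b2))).

Lemma qc1_opposite_iff (c : R) : qc1 (A_of c) = - qc1 (B_of c) <-> c = lead_coef.
Proof.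
  apply scaled_eq_iff with (k := - 2 * ((a1 + a2) - (b1 + b2))).
  - apply Rmult_integral_contrapositive_currified; [lra | exact Hds].
  - unfold A_of, B_of, hermite_quartic, lead_coef; simpl; field.
    repeat split; auto.
Qed.

Lemma admissible_solution (A B : quartic) :
  admissible a1 a2 b1 b2 Ca1 Ca2 Cb1 Cb2 A B ->
  A = A_of lead_coef /\ B = B_of lead_coef.
Proof.
  intros (Ea1 & Ea2 & Eb1 & Eb2 & Da1 & Da2 & Db1 & Db2 & E0 & E1 & E2).
  assert (HA : A = A_of (qc0 A)) by (apply hermite_quartic_unique; auto).
  assert (HB : B = B_of (qc0 A)).
  { unfold B_of; rewrite E0, Ropp_involutive; apply hermite_quartic_unique; auto. }
  assert (Hc : qc0 A = lead_coef).
  { apply qc1_opposite_iff; rewrite <- HA, <- HB; exact E1. }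
  rewrite <- Hc; split; assumption.
Qed.

(* The candidate pair satisfies every condition except possibly A_2 = -B_2, which is a
   rescaling of the first displayed equation. *)
Lemma solution_admissible_iff :
  admissible a1 a2 b1 b2 Ca1 Ca2 Cb1 Cb2 (A_of lead_coef) (B_of lead_coef)
  <-> cond_exist a1 a2 b1 b2 Ca1 Ca2 Cb1 Cb2.
Proof.
  assert (Hqc2 : qc2 (A_of lead_coef) = - qc2 (B_of lead_coef)
                 <-> cond_exist a1 a2 b1 b2 Ca1 Ca2 Cb1 Cb2).
  { unfold cond_exist; apply scaled_eq_iff with (k := - / ((a1 + a2) - (b1 + b2))).
    - apply Ropp_neq_0_compat, Rinv_neq_0_compat; exact Hds.
    - unfold A_of, B_of, hermite_quartic, lead_coef; simpl; field.
      repeat split; auto. }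
  destruct (hermite_quartic_interpolates lead_coef a1 a2 (2 / Ca1) (2 / Ca2) Ha12)
    as (Ea1 & Ea2 & Da1 & Da2).
  destruct (hermite_quartic_interpolates (- lead_coef) b1 b2 (- (2 / Cb1)) (- (2 / Cb2)) Hb12)
    as (Eb1 & Eb2 & Db1 & Db2).
  assert (E0 : qc0 (A_of lead_coef) = - qc0 (B_of lead_coef))
    by (unfold A_of, B_of; simpl; ring).
  assert (E1 : qc1 (A_of lead_coef) = - qc1 (B_of lead_coef))
    by (apply qc1_opposite_iff; reflexivity).
  rewrite <- Hqc2; unfold admissible, A_of, B_of in *.
  split; [intros (_ & _ & _ & _ & _ & _ & _ & _ & _ & _ & E2); exact E2|].
  intros E2; repeat split; assumption.
Qed.

Lemma admissible_iff (A B : quartic) :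
  admissible a1 a2 b1 b2 Ca1 Ca2 Cb1 Cb2 A B <->
  cond_exist a1 a2 b1 b2 Ca1 Ca2 Cb1 Cb2 /\ A = A_of lead_coef /\ B = B_of lead_coef.
Proof using Ha12 Hb12 Hsum HCa1 HCa2 HCb1 HCb2.
  split.
  - intros H; destruct (admissible_solution A B H) as [HA HB].
    rewrite HA, HB in H; split; [apply solution_admissible_iff; exact H | auto].
  - intros (Hc & -> & ->); apply solution_admissible_iff; exact Hc.
Qed.

Lemma lead_coef_zero_iff : lead_coef = 0 <-> cond_A0 a1 a2 b1 b2 Ca1 Ca2 Cb1 Cb2.
Proof using Ha12 Hb12 Hsum HCa1 HCa2 HCb1 HCb2.
  unfold cond_A0; apply scaled_eq_iff with (k := / ((a1 + a2) - (b1 + b2))).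
  - apply Rinv_neq_0_compat; exact Hds.
  - unfold lead_coef; field; repeat split; auto.
Qed.

Lemma solution_qc3_opposite :
  lead_coef = 0 -> cond_A3 a1 a2 b1 b2 Ca1 Ca2 Cb1 Cb2 ->
  qc3 (A_of lead_coef) = - qc3 (B_of lead_coef).
Proof using Ha12 Hb12 Hsum HCa1 HCa2 HCb1 HCb2.
  intros Hc H3; rewrite Hc.
  revert H3; unfold cond_A3; apply scaled_eq_iff with (k := 2); [lra|].
  unfold A_of, B_of, hermite_quartic; simpl; field.
  repeat split; auto.
Qed.

End Admissible.

Theorem mainTheorem7 (a1 a2 b1 b2 Ca1 Ca2 Cb1 Cb2 : R)
  (Hb : b1 < b2) (Hba : b2 < a1) (Ha : a1 < a2)
  (HCa1 : Ca1 <> 0) (HCa2 : Ca2 <> 0) (HCb1 : Cb1 <> 0) (HCb2 : Cb2 <> 0) :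
  ((exists A B : quartic, admissible a1 a2 b1 b2 Ca1 Ca2 Cb1 Cb2 A B)
     <-> cond_exist a1 a2 b1 b2 Ca1 Ca2 Cb1 Cb2) /\
  (forall A B A' B' : quartic,
     admissible a1 a2 b1 b2 Ca1 Ca2 Cb1 Cb2 A B ->
     admissible a1 a2 b1 b2 Ca1 Ca2 Cb1 Cb2 A' B' -> A = A' /\ B = B') /\
  (forall A B : quartic, admissible a1 a2 b1 b2 Ca1 Ca2 Cb1 Cb2 A B ->
     (qc0 A = 0 <-> cond_A0 a1 a2 b1 b2 Ca1 Ca2 Cb1 Cb2)) /\
  (forall A B : quartic, admissible a1 a2 b1 b2 Ca1 Ca2 Cb1 Cb2 A B ->
     cond_A0 a1 a2 b1 b2 Ca1 Ca2 Cb1 Cb2 ->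
     cond_A3 a1 a2 b1 b2 Ca1 Ca2 Cb1 Cb2 ->
     qc0 A = 0 /\ qc3 A = - qc3 B).
Proof.
  assert (Ha12 : a1 <> a2) by lra.
  assert (Hb12 : b1 <> b2) by lra.
  assert (Hsum : a1 + a2 <> b1 + b2) by lra.
  pose proof (admissible_iff _ _ _ _ _ _ _ _ Ha12 Hb12 Hsum HCa1 HCa2 HCb1 HCb2) as Hadm.
  pose proof (lead_coef_zero_iff _ _ _ _ _ _ _ _ Ha12 Hb12 Hsum HCa1 HCa2 HCb1 HCb2) as Hlead.
  pose proof (solution_qc3_opposite _ _ _ _ _ _ _ _ Ha12 Hb12 Hsum HCa1 HCa2 HCb1 HCb2)
    as Hqc3.
  (* The ordering is only used through distinctness of the nodes and a1 + a2 <> b1 + b2;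
     note that qc0 (A_of c) = c holds by definition. *)
  split; [|split; [|split]].
  - split; [intros (A & B & H); apply (Hadm A B), H|].
    intros Hc; do 2 eexists; apply Hadm; split; [exact Hc | split; reflexivity].
  - intros A B A' B' (_ & -> & ->)%Hadm (_ & -> & ->)%Hadm; split; reflexivity.
  - intros A B (_ & -> & _)%Hadm; exact Hlead.
  - intros A B (_ & -> & ->)%Hadm H0 H3.
    assert (Hc : lead_coef a1 a2 b1 b2 Ca1 Ca2 Cb1 Cb2 = 0) by (apply Hlead, H0).
    split; [exact Hc | exact (Hqc3 Hc H3)].
Qed.
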